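(* Let $G$ be a complete convex geometric graph and let $B$ be a blocker for $\mathcal{T}_{\leq 3}(G)$ that is not a star. Suppose $B$ is a caterpillar with a spine whose terminal edges $[a,a']$ and $[b',b]$ lie on the boundary of $\mathrm{conv}(G)$, where $a$ and $b$ are the endpoints of the spine (leaves of $B$) and $a'\neq b'$. Let $\alpha$ be the closed arc of the boundary of $\mathrm{conv}(G)$ with endpoints $a,b$ that contains $a'$ and $b'$, and let $\beta$ be the other closed arc with endpoints $a,b$. Then every leaf of $B$ lies on $\beta$.
   Context: A geometric graph is a graph whose vertices are points in the plane in general position (no three collinear) and whose edges are straight segments between pairs of vertices; $G$ is complete if all pairs of vertices are joined, and convex if its vertices are in convex position. $\mathrm{conv}(G)$ is the convex hull of $V(G)$. $\mathcal{T}_{\leq k}(G)$ denotes the family of all simple (non-crossing) spanning trees of $G$ of (graph) diameter at most $k$. A subgraph $B$ blocks a family $\mathcal{F}$ of subgraphs if it shares at least one edge with every member of $\mathcal{F}$; a blocker of $\mathcal{F}$ is a subgraph that blocks $\mathcal{F}$ and has the smallest possible number of edges among all subgraphs blocking $\mathcal{F}$. A star of $G$ is the set of all edges of $G$ emanating from a single vertex. A tree is a caterpillar if deleting all its leaves and their incident edges leaves a path (or empty graph); a spine is a longest path in the caterpillar. *)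

(* Combinatorial model of a complete convex geometric graph:
   the n vertices are 'I_n, listed in (counterclockwise) order along the
   boundary of the convex hull.  Two segments between points in convex
   position cross iff their endpoints interleave in this cyclic order. *)
From mathcomp Require Import all_boot.
Set Implicit Arguments. Unset Strict Implicit. Unset Printing Implicit Defensive.

Section ConvexGeomGraph.
Variable n : nat.
Local Notation V := 'I_n.
Local Notation edge_t := {set V}.
Local Notation graph_t := {set {set V}}.

Definition is_edge (e : edge_t) : bool := #|e| == 2.

Definition subgraph (B : graph_t) : bool := [forall e in B, is_edge e].

Definition adj (B : graph_t) : rel V := fun x y => (x != y) && ([set x; y] \in B).

Definition verts (B : graph_t) : {set V} := [set x | [exists y, adj B x y]].

Definition deg (B : graph_t) (x : V) : nat := #|[set y | adj B x y]|.
Definition leaf (B : graph_t) (x : V) : bool := deg B x == 1.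

Definition cross (e f : edge_t) : bool :=
  [exists a : V, exists b : V, exists c : V, exists d : V,
     [&& e == [set a; b], f == [set c; d], (a < c < b)%N & ((d < a) || (b < d))%N]].

Definition noncrossing (T : graph_t) : bool :=
  [forall e in T, forall f in T, ~~ cross e f].

Definition spanning_tree (T : graph_t) : Prop :=
  [/\ subgraph T, (forall x y : V, connect (adj T) x y) & #|T| = n.-1].

Definition diam_le (T : graph_t) (k : nat) : Prop :=
  forall x y : V, exists p : seq V,
    [/\ (size p <= k)%N, path (adj T) x p & last x p = y].

Definition in_T3 (T : graph_t) : Prop :=
  [/\ spanning_tree T, noncrossing T & diam_le T 3].

Definition blocks (B : graph_t) : Prop :=
  forall T : graph_t, in_T3 T -> exists e, e \in B /\ e \in T.

Definition blocker (B : graph_t) : Prop :=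
  [/\ subgraph B, blocks B &
      forall B' : graph_t, subgraph B' -> blocks B' -> (#|B| <= #|B'|)%N].

Definition star (v : V) : graph_t := [set e | is_edge e && (v \in e)].
Definition is_star (B : graph_t) : Prop := exists v, B = star v.

Definition tree_on (B : graph_t) : Prop :=
  [/\ subgraph B,
      (forall x y, x \in verts B -> y \in verts B -> connect (adj B) x y) &
      #|B| = #|verts B| - 1].

Definition induced_path (B : graph_t) (S : {set V}) : Prop :=
  exists s : seq V, [/\ uniq s, [set x in s] = S &
    forall x y, x \in S -> y \in S ->
      (adj B x y <-> ((x, y) \in zip s (behead s)) || ((y, x) \in zip s (behead s)))].

Definition internal (B : graph_t) : {set V} := [set x in verts B | (2 <= deg B x)%N].

Definition caterpillar (B : graph_t) : Prop :=
  tree_on B /\ induced_path B (internal B).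

Definition bpath (B : graph_t) (p : seq V) : bool :=
  if p is x :: q then uniq p && path (adj B) x q else false.

Definition spine (B : graph_t) (s : seq V) : Prop :=
  bpath B s /\ forall p, bpath B p -> (size p <= size s)%N.

(* counterclockwise distance along the hull from x to y *)
Definition cdist (x y : V) : nat := (y + n - x) %% n.

Definition on_boundary (x y : V) : bool := (cdist x y == 1) || (cdist y x == 1).

(* closed boundary arc going counterclockwise from x to y *)
Definition hull_arc (x y : V) : {set V} := [set z | (cdist x z <= cdist x y)%N].

End ConvexGeomGraph.

(* Orient the hull so that alpha runs counterclockwise from a to b; then a' follows a and
   b' precedes b.  Since a spine is a longest path and the internal vertices of a caterpillar
   induce a path (so B has no cycle through them), the spine ends a and b are leaves of B
   hanging at a' and b', while a' and b' themselves are internal.  Suppose a leaf x of B, with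
   unique neighbour v, lies strictly inside alpha.  If v comes after x on alpha, join every
   vertex of the open arc (a, v) other than x to x and every other vertex to a: vertices inside
   an arc and outside it span no crossing chords, so this double star is a simple spanning tree
   of diameter at most 3.  Its only edges that could lie in B are x v, impossible as v is not
   on the arc, and a a', impossible as a' is.  If v comes before x, the arc (v, b) with
   centre b gives the same contradiction. *)

From mathcomp Require Import all_boot zify.
Set Implicit Arguments. Unset Strict Implicit. Unset Printing Implicit Defensive.

Section HullDistance.
Variable n : nat.
Implicit Types x y z a b : 'I_n.

Lemma cdistE x y : cdist x y = if x <= y then y - x else y + n - x.
Proof.
rewrite /cdist; have := ltn_ord x; have := ltn_ord y => hy hx.
case: leqP => h; last by rewrite modn_small; lia.
by rewrite -addnBAC // modnDr modn_small //; lia.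
Qed.

Lemma cdist_lt x y : cdist x y < n.
Proof. by rewrite ltn_pmod // (leq_ltn_trans _ (ltn_ord x)). Qed.

Lemma cdistxx x : cdist x x = 0.
Proof. by rewrite cdistE leqnn subnn. Qed.

Lemma cdist_inj x : injective (cdist x).
Proof.
move=> y z; rewrite !cdistE => E; apply: ord_inj; move: E.
have := ltn_ord x; have := ltn_ord y; have := ltn_ord z.
by do 2 case: ifP => ?; lia.
Qed.

Lemma cdist_eq0 x y : (cdist x y == 0) = (x == y).
Proof. by rewrite -(cdistxx x) (inj_eq (@cdist_inj x)). Qed.

Lemma cdistD x y z :
  cdist x z = if cdist x y + cdist y z < n then cdist x y + cdist y z
              else cdist x y + cdist y z - n.
Proof.
rewrite !cdistE; have := ltn_ord x; have := ltn_ord y; have := ltn_ord z.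
by case: (leqP x y); case: (leqP y z); case: (leqP x z); case: ifP; lia.
Qed.

Lemma cdistC x y : x != y -> cdist x y + cdist y x = n.
Proof.
move=> /eqP xy; rewrite !cdistE; have := ltn_ord x; have := ltn_ord y.
have : (x : nat) <> y by move=> /ord_inj.
by do 2 case: ifP => ?; lia.
Qed.

Lemma on_boundaryC x y : on_boundary x y = on_boundary y x.
Proof. by rewrite /on_boundary orbC. Qed.

Lemma boundary_arc_first a a' b : on_boundary a a' -> a' \in hull_arc a b -> a' != b ->
  cdist a a' = 1.
Proof.
move=> /orP[/eqP //|/eqP a'a]; rewrite inE => a'_in /eqP[].
have a'_a : a' != a by rewrite -cdist_eq0 a'a.
by apply: (@cdist_inj a); have := cdistC a'_a; have := cdist_lt a b; lia.
Qed.

Lemma boundary_arc_last a b' b : on_boundary b' b -> b' \in hull_arc a b -> b' != a ->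
  cdist a b' + 1 = cdist a b.
Proof.
move=> /orP[]/eqP b'b; rewrite inE => b'_in; rewrite eq_sym -cdist_eq0 => a_b'.
- by move: b'_in a_b'; rewrite (cdistD a b' b) b'b; have := cdist_lt a b'; case: ifP; lia.
- by move: b'_in a_b'; rewrite (cdistD a b b') b'b; have := cdist_lt a b; case: ifP; lia.
Qed.

Lemma notin_hull_arc a b x : a != b -> x \notin hull_arc b a -> 0 < cdist a x < cdist a b.
Proof.
rewrite inE -ltnNge (cdistD b a x) => ab; have := cdistC ab; have := cdist_lt a x.
by case: ifP; lia.
Qed.

End HullDistance.

Section CyclicOrder.
Variable n : nat.
Implicit Types a b c d w : 'I_n.

(* a, c, b, d lie in this counterclockwise order, i.e. the chords [a,b] and [c,d] interleave *)
Definition ccw a c b d : bool := (0 < cdist a c < cdist a b) && (cdist a b < cdist a d).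

Definition open_arc a0 l h : {set 'I_n} := [set w | l < cdist a0 w < h].

Lemma cross_ccw (e f : {set 'I_n}) : cross e f ->
  exists a c b d, [/\ e = [set a; b], f = [set c; d] & ccw a c b d].
Proof.
move=> /existsP[a /existsP[b /existsP[c /existsP[d /and4P[/eqP -> /eqP -> acb dab]]]]].
exists a, c, b, d; split => //; rewrite /ccw !cdistE.
by move: acb dab; have := ltn_ord b; case: ifP; case: ifP; case: ifP; lia.
Qed.

Lemma ccw_open_arc a c b d a0 l h : ccw a c b d ->
  (a \in open_arc a0 l h) = (b \in open_arc a0 l h) ->
  (c \in open_arc a0 l h) = (d \in open_arc a0 l h) ->
  (a \in open_arc a0 l h) = (c \in open_arc a0 l h).
Proof.
rewrite /ccw !inE (cdistD a0 a c) (cdistD a0 a b) (cdistD a0 a d).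
have := cdist_lt a0 a; have := cdist_lt a c; have := cdist_lt a b; have := cdist_lt a d.
by do 3 case: ifP => ?; lia.
Qed.

Lemma open_arc_noncross a0 l h (e f : {set 'I_n}) :
  {in e, forall w, w \in open_arc a0 l h} -> {in f, forall w, w \notin open_arc a0 l h} ->
  ~~ cross e f && ~~ cross f e.
Proof.
move=> eI fO; apply/andP; split; apply/negP => /cross_ccw[a [c [b [d [E F acbd]]]]];
  move: eI fO; rewrite E F => eI fO; have := ccw_open_arc (a0 := a0) (l := l) (h := h) acbd.
- have [a_in b_in] := (eI a (set21 a b), eI b (set22 a b)).
  have [c_out d_out] := (fO c (set21 c d), fO d (set22 c d)).
  by rewrite a_in b_in (negbTE c_out) (negbTE d_out) => /(_ erefl erefl).
- have [a_out b_out] := (fO a (set21 a b), fO b (set22 a b)).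
  have [c_in d_in] := (eI c (set21 c d), eI d (set22 c d)).
  by rewrite c_in d_in (negbTE a_out) (negbTE b_out) => /(_ erefl erefl).
Qed.

Lemma cross_disjoint (e f : {set 'I_n}) z : cross e f -> z \in e -> z \in f -> False.
Proof.
move=> /existsP[a /existsP[b /existsP[c /existsP[d /and4P[/eqP -> /eqP -> acb dab]]]]].
by rewrite !inE => /orP[]/eqP-> /orP[]/eqP eq_z; move: acb dab; rewrite eq_z; lia.
Qed.

End CyclicOrder.

Definition short_walk (T : Type) (e : rel T) (k : nat) (x y : T) : Prop :=
  exists p : seq T, [/\ size p <= k, path e x p & last x p = y].

Lemma short_walk1 (T : Type) (e : rel T) x y : x = y \/ e x y -> short_walk e 1 x y.
Proof. by case=> [<-|exy]; [exists [::] | exists [:: y]; rewrite /= exy]. Qed.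

Lemma short_walk_trans (T : Type) (e : rel T) i j x y z :
  short_walk e i x y -> short_walk e j y z -> short_walk e (i + j) x z.
Proof.
move=> [p [sp ep lp]] [q [sq eq lq]]; exists (p ++ q).
by rewrite size_cat leq_add // cat_path last_cat lp ep eq.
Qed.

Lemma adjC n (B : {set {set 'I_n}}) : symmetric (adj B).
Proof. by move=> u v; rewrite /adj eq_sym setUC. Qed.

Section DoubleStar.
Variables (n : nat) (c x : 'I_n) (P : {set 'I_n}).
Hypotheses (cx : c != x) (cP : c \notin P) (xP : x \notin P).

Definition hub (w : 'I_n) : 'I_n := if w \in P then x else c.

Definition double_star : {set {set 'I_n}} := [set [set hub w; w] | w in [set~ c]].

Local Notation T := double_star.

Lemma hub_neq w : w != c -> hub w != w.
Proof.
rewrite /hub; case: ifP => [wP _|_ wc]; last by rewrite eq_sym.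
by apply: contraTneq wP => <-.
Qed.

Lemma adj_hub w : w != c -> adj T w (hub w).
Proof.
move=> wc; rewrite /adj eq_sym hub_neq // setUC.
by apply: imset_f; rewrite !inE.
Qed.

Lemma adj_hubs u w : hub u = hub w \/ adj T (hub u) (hub w).
Proof.
have xc : adj T x c by have := @adj_hub x; rewrite /hub (negbTE xP) eq_sym; apply.
by rewrite /hub; do 2 case: ifP => _; auto; rewrite adjC; auto.
Qed.

Lemma hub_or_adj u : u = hub u \/ adj T u (hub u).
Proof.
case: (eqVneq u c) => [->|uc]; last by right; apply: adj_hub.
by left; rewrite /hub (negbTE cP).
Qed.

Lemma double_star_diam : diam_le T 3.
Proof.
move=> u w; apply: (short_walk_trans (short_walk1 (hub_or_adj u))).
apply: (short_walk_trans (short_walk1 (adj_hubs u w))); apply: short_walk1.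
by case: (hub_or_adj w) => [<-|]; [left | rewrite adjC; right].
Qed.

Lemma hub_in w : hub w \in [set c; x].
Proof. by rewrite /hub !inE; case: ifP; rewrite eqxx ?orbT. Qed.

Lemma double_star_spanning : spanning_tree T.
Proof.
split.
- apply/forall_inP => e /imsetP[w]; rewrite !inE => wc ->.
  by rewrite /is_edge cards2 hub_neq.
- move=> u w; have [p [_ up lp]] := double_star_diam u w.
  by apply/connectP; exists p.
- rewrite card_in_imset ?cardsC1 ?card_ord //.
  move=> u w; rewrite !inE => uc wc E.
  have /set2P[u_hub|//] : u \in [set hub w; w] by rewrite -E set22.
  have /set2P[w_hub|//] : w \in [set hub u; u] by rewrite E set22.
  have := hub_in u; have := hub_in w; rewrite -u_hub -w_hub !inE.
  by rewrite (negbTE uc) (negbTE wc) => /eqP-> /eqP->.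
Qed.

Hypothesis noncross_hub_chords : forall w1 w2, w1 \in P -> w2 \notin P -> w2 \notin [set c; x] ->
  ~~ cross [set x; w1] [set c; w2] && ~~ cross [set c; w2] [set x; w1].

Lemma double_star_noncrossing : noncrossing T.
Proof.
apply/forall_inP => e /imsetP[u]; rewrite !inE => uc ->.
apply/forall_inP => f /imsetP[w]; rewrite !inE => wc ->.
have share (E F : {set 'I_n}) z : z \in E -> z \in F -> ~~ cross E F.
  by move=> ze zf; apply/negP => /cross_disjoint/(_ ze zf).
case: (eqVneq (hub u) (hub w)) => [E|]; first by apply: (share _ _ (hub u)); rewrite ?E set21.
rewrite /hub; case: ifP => uP; case: ifP => wP; rewrite ?eqxx // => _.
- case: (eqVneq w x) => [->|wx]; first by apply: (share _ _ x); rewrite !inE eqxx ?orbT.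
  have wcx : w \notin [set c; x] by rewrite !inE negb_or wc.
  exact: (andP (noncross_hub_chords uP (negbT wP) wcx)).1.
- case: (eqVneq u x) => [->|ux]; first by apply: (share _ _ x); rewrite !inE eqxx ?orbT.
  have ucx : u \notin [set c; x] by rewrite !inE negb_or uc.
  exact: (andP (noncross_hub_chords wP (negbT uP) ucx)).2.
Qed.

Lemma double_star_T3 : in_T3 T.
Proof. by split; [apply: double_star_spanning | apply: double_star_noncrossing | apply: double_star_diam]. Qed.

End DoubleStar.

Section ArcDoubleStar.
Variables (n : nat) (a0 c x : 'I_n) (l h : nat).
Local Notation I := (open_arc a0 l h).
Hypotheses (xI : x \in I) (cI : c \notin I).

Let cx : c != x. Proof. by apply: contraNneq cI => ->. Qed.
Let cP : c \notin I :\ x. Proof. by rewrite in_setD1 (negbTE cI) andbF. Qed.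
Let xP : x \notin I :\ x. Proof. by rewrite in_setD1 eqxx. Qed.

Lemma open_arc_double_star_T3 : in_T3 (double_star c x (I :\ x)).
Proof.
apply: double_star_T3 => // w1 w2; rewrite !in_setD1 in_set2 negb_or.
move=> /andP[_ w1I] /nandP w2P /andP[w2c w2x].
have w2I : w2 \notin I by case: w2P => //; rewrite w2x.
by apply: (open_arc_noncross (a0 := a0) (l := l) (h := h)) => z /set2P[]->.
Qed.

Lemma blocks_open_arc (B : {set {set 'I_n}}) : blocks B ->
  (exists2 w, w \in I & adj B x w) \/ (exists2 w, w \notin I :\ x & adj B c w).
Proof.
move=> /(_ _ open_arc_double_star_T3) [e [eB /imsetP[w]]]; rewrite !inE => wc Ee.
have hub_w : adj B (hub c x (I :\ x) w) w by rewrite /adj (hub_neq xP wc) -Ee eB.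
move: hub_w; rewrite /hub; case: ifP => [/setD1P[_ wI]|wP] hub_w.
- by left; exists w.
- by right; exists w; rewrite ?wP.
Qed.

End ArcDoubleStar.

Lemma blocks_no_leaf_inside_arc n (B : {set {set 'I_n}}) (a a' b' b x v : 'I_n) :
  blocks B -> (forall y, adj B a y -> y = a') -> (forall y, adj B b y -> y = b') ->
  adj B x v -> (forall y, adj B x y -> y = v) ->
  cdist a a' = 1 -> cdist a b' + 1 = cdist a b -> 1 < cdist a x -> cdist a x + 1 < cdist a b ->
  False.
Proof.
move=> hB a_nb b_nb xv x_nb aa' ab' ax xb.
have [xv_lt|vx_lt|] := ltngtP (cdist a x) (cdist a v).
- have xI : x \in open_arc a 0 (cdist a v) by rewrite inE xv_lt; lia.
  have aI : a \notin open_arc a 0 (cdist a v) by rewrite inE cdistxx.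
  case: (blocks_open_arc xI aI hB) => [[w wI /x_nb wv]|[w wP /a_nb wa']].
  + by move: wI; rewrite wv inE ltnn andbF.
  + by move: wP; rewrite wa' in_setD1 inE -(inj_eq (@cdist_inj _ a)); lia.
- have xI : x \in open_arc a (cdist a v) (cdist a b) by rewrite inE vx_lt; lia.
  have bI : b \notin open_arc a (cdist a v) (cdist a b) by rewrite inE ltnn andbF.
  case: (blocks_open_arc xI bI hB) => [[w wI /x_nb wv]|[w wP /b_nb wb']].
  + by move: wI; rewrite wv inE ltnn.
  + by move: wP; rewrite wb' in_setD1 inE -(inj_eq (@cdist_inj _ a)); lia.
- by move/cdist_inj => vx; move: xv; rewrite /adj vx eqxx.
Qed.

Definition unit_step : rel nat := fun i j => (j == i.+1) || (i == j.+1).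

Lemma unit_step_path_monotone (i0 i1 : nat) (s : seq nat) :
  uniq [:: i0, i1 & s] -> path unit_step i0 (i1 :: s) ->
  (i1 = i0.+1 -> last i1 s = i1 + size s) /\ (i0 = i1.+1 -> i1 = last i1 s + size s).
Proof.
elim: s i0 i1 => [|i2 s IH] i0 i1; first by rewrite /= !addn0.
rewrite [uniq _]/= => /andP[i0_out u12] /andP[i01 p12].
have i02 : i0 != i2 by apply: contraNneq i0_out => ->; rewrite !inE eqxx orbT.
have [up down] := IH i1 i2 u12 p12.
case/andP: p12 => i12 _.
by move: i01 i12 i02; rewrite /= /unit_step; split; lia.
Qed.

Lemma unit_step_acyclic (s : seq nat) : uniq s -> 2 < size s -> ~~ cycle unit_step s.
Proof.
case: s => [|i0 [|i1 [|i2 s]]] // us _; apply/negP.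
rewrite /cycle rcons_path => /andP[p0 back].
have [up down] := unit_step_path_monotone us p0.
by case/andP: p0 => i01 _; move: i01 back up down; rewrite /unit_step /=; lia.
Qed.

Lemma mem_zip_behead (T : eqType) (s : seq T) u w :
  (u, w) \in zip s (behead s) -> u \in s /\ w \in s.
Proof.
elim: s => [|z [|z' s] IH] //; rewrite in_cons => /orP[/eqP[-> ->]|/IH[u_in w_in]].
  by rewrite !inE !eqxx orbT.
by rewrite !(in_cons z) u_in w_in !orbT.
Qed.

Lemma index_zip_behead (T : eqType) (s : seq T) u w :
  uniq s -> (u, w) \in zip s (behead s) -> index w s = (index u s).+1.
Proof.
elim: s => [|z [|z' s] IH] // /andP[z_out us]; rewrite in_cons => /orP[/eqP[-> ->]|uw].
  have zz' : z != z' by apply: contraNneq z_out => ->; apply: mem_head.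
  by rewrite /= eqxx (negbTE zz') eqxx.
have [u_in w_in] := mem_zip_behead uw.
have zu : z != u by apply: contraNneq z_out => ->.
have zw : z != w by apply: contraNneq z_out => ->.
by rewrite /= (negbTE zu) (negbTE zw); move: (IH us uw) => /= ->.
Qed.

Section Caterpillar.
Variables (n : nat) (B : {set {set 'I_n}}).

Lemma internal_of_adj z u w : adj B z u -> adj B z w -> u != w -> z \in internal B.
Proof.
move=> zu zw uw; rewrite inE; apply/andP; split; first by rewrite inE; apply/existsP; exists u.
have sub : [set u; w] \subset [set y | adj B z y] by apply/subsetP => y /set2P[]->; rewrite inE.
by have := subset_leq_card sub; rewrite cards2 uw.
Qed.

Lemma leaf_not_internal x : leaf B x -> x \notin internal B.
Proof. by rewrite /leaf inE => /eqP->; rewrite andbF. Qed.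

Lemma leaf_neighbor x : leaf B x -> exists v, adj B x v /\ forall y, adj B x y -> y = v.
Proof.
move=> /cards1P[v Ev]; exists v.
have nbP y : adj B x y = (y == v) by rewrite -in_set1 -Ev inE.
by split=> [|y]; rewrite nbP // => /eqP.
Qed.

Lemma cycle_internal s : uniq s -> 2 < size s -> cycle (adj B) s -> all (mem (internal B)) s.
Proof.
move=> us s3 cs; apply/allP => z /rot_to[i s' Er].
move: s3 us cs; rewrite -(size_rot i) -(rot_uniq i) -(rot_cycle i) Er.
case: s' {Er} => [|y [|y' r]] //= _ /and4P[_ y_out _ _] /and3P[zy _].
rewrite rcons_path => /andP[_ back].
apply: (internal_of_adj zy (_ : adj B z (last y' r))); first by rewrite adjC.
by apply: contraNneq y_out => ->; apply: mem_last.
Qed.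

Lemma bpath_rev p : bpath B p -> bpath B (rev p).
Proof.
case: p => [|x r] // /andP[u pp].
have E : rev (x :: r) = last x r :: rev (belast x r) by rewrite lastI rev_rcons.
rewrite E /bpath -E rev_uniq u rev_path; move: pp; apply: sub_path => y z.
by rewrite adjC.
Qed.

Lemma spine_rev s : spine B s -> spine B (rev s).
Proof. by move=> [bs longest]; split=> [|p /longest]; rewrite ?size_rev ?bpath_rev. Qed.

Lemma bpath_internal u w z r : bpath B [:: u, w, z & r] -> w \in internal B.
Proof.
move=> /andP[/andP[u_out _] /and3P[uw wz _]]; rewrite adjC in uw.
by apply: (internal_of_adj uw wz); apply: contraNneq u_out => ->; rewrite !inE eqxx orbT.
Qed.

Hypothesis catB : caterpillar B.

Lemma caterpillar_acyclic s : uniq s -> 2 < size s -> ~~ cycle (adj B) s.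
Proof.
move: catB => [_ [q [uq Sq Hq]]] us s3; apply/negP => cs.
have s_int := cycle_internal us s3 cs.
have int_q z : z \in internal B -> z \in q by rewrite -Sq inE.
have step : {in internal B &, forall u w, adj B u w -> unit_step (index u q) (index w q)}.
  move=> u w u_int w_int /(Hq _ _ u_int w_int) /orP[]/(index_zip_behead uq) ->.
  - by rewrite /unit_step eqxx.
  - by rewrite /unit_step eqxx orbT.
have idx_inj : {in s &, injective (index^~ q)}.
  move=> u w /(allP s_int)/int_q u_q /(allP s_int)/int_q w_q E.
  by rewrite -(nth_index u u_q) -(nth_index u w_q) E.
have := unit_step_acyclic (s := map (index^~ q) s).
rewrite (map_inj_in_uniq idx_inj) size_map (homo_cycle_in step s_int cs).
by move/(_ us s3).
Qed.

Lemma spine_head_neighbor a a' t y : spine B [:: a, a' & t] -> adj B a y -> y = a'.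
Proof.
move=> [/andP[us ps] longest] ay; case: (eqVneq y a') => // ya'; exfalso.
have ya : y != a by move: ay; rewrite /adj eq_sym => /andP[].
case: (boolP (y \in [:: a, a' & t])) => [y_in|y_out]; last first.
  have : bpath B [:: y, a, a' & t].
    apply/andP; split; first by rewrite cons_uniq y_out us.
    by move: ps; rewrite /= [adj B y a]adjC ay.
  by move/longest; rewrite ltnn.
have yt : y \in t by move: y_in; rewrite !inE (negbTE ya) (negbTE ya').
move: us ps; case/path.splitPr: yt => t1 t2.
rewrite -cat_rcons -!cat_cons cat_uniq cat_path => /andP[us _] /andP[ps _].
have cyc : cycle (adj B) [:: a, a' & rcons t1 y].
  by rewrite /cycle rcons_path ps /= last_rcons adjC.
by move: (caterpillar_acyclic us); rewrite cyc /= size_rcons => /(_ isT).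
Qed.

End Caterpillar.

Lemma leaf_in_hull_arc n (B : {set {set 'I_n}}) (a a' b' b x : 'I_n) :
  blocks B -> (forall y, adj B a y -> y = a') -> (forall y, adj B b y -> y = b') ->
  on_boundary a a' -> on_boundary b' b -> a != b -> a' != b -> b' != a ->
  a' \in hull_arc a b -> b' \in hull_arc a b ->
  leaf B x -> x != a' -> x != b' -> x \in hull_arc b a.
Proof.
move=> hB a_nb b_nb aa' b'b ab a'b b'a a'_in b'_in lx xa' xb'; apply/contraT => x_out; exfalso.
have [v [xv x_nb]] := leaf_neighbor lx.
have da' := boundary_arc_first aa' a'_in a'b; have db' := boundary_arc_last b'b b'_in b'a.
have := notin_hull_arc ab x_out.
move: xa' xb'; rewrite -!(inj_eq (@cdist_inj _ a)) da' => xa' xb' ax.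
by apply: (blocks_no_leaf_inside_arc hB a_nb b_nb xv x_nb da' db'); clear -xa' xb' ax db'; lia.
Qed.

Theorem claim1 (n : nat) (B : {set {set 'I_n}}) (a a' b' b : 'I_n)
    (m : seq 'I_n) (alpha beta : {set 'I_n}) :
  blocker B -> ~ is_star B -> caterpillar B ->
  spine B ([:: a, a' & m] ++ [:: b'; b]) ->
  on_boundary a a' -> on_boundary b' b -> a' != b' ->
  (alpha = hull_arc a b /\ beta = hull_arc b a \/ alpha = hull_arc b a /\ beta = hull_arc a b) ->
  a' \in alpha -> b' \in alpha ->
  forall x, x \in verts B -> leaf B x -> x \in beta.
Proof.
move=> [_ hB _] _ catB sp aa' b'b _ arcs a'_in b'_in x _ lx.
have rsp : spine B [:: b, b' & rev m ++ [:: a'; a]].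
  by have := spine_rev sp; rewrite rev_cat (rev_cons a) (rev_cons a') -!cats1 -catA; apply.
have a_nb := spine_head_neighbor catB sp; have b_nb := spine_head_neighbor catB rsp.
have a'_int : a' \in internal B by case: sp => + _; case: (m) => [|z r]; apply: bpath_internal.
have b'_int : b' \in internal B by case: rsp => + _; case: (rev m) => [|z r]; apply: bpath_internal.
have [xa' xb'] : x != a' /\ x != b'.
  by split; apply: contraTneq (leaf_not_internal lx) => ->; rewrite negbK.
have us : uniq ([:: a, a' & m] ++ [:: b'; b]) by case: sp => /andP[].
have [ab a'b b'a] : [/\ a != b, a' != b & b' != a].
  by split; apply: contraTneq us => ->; rewrite /= !(inE, mem_cat) !eqxx !orbT /= ?andbF.
case: arcs => [[-> ->]|[-> ->]] in a'_in b'_in *.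
- exact: (leaf_in_hull_arc hB a_nb b_nb aa' b'b ab a'b b'a a'_in b'_in lx xa' xb').
- rewrite on_boundaryC in aa'; rewrite on_boundaryC in b'b.
  by apply: (leaf_in_hull_arc hB b_nb a_nb b'b aa' _ b'a a'b b'_in a'_in lx xb' xa'); rewrite eq_sym.
Qed.
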